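(* Let $P_0(X)= 32 X^6-48 X^4+18 X^2-1$ and, for $p=(p_0,\dots,p_4)\in\mathbb R^5$, $P_p(X)=P_0(X)+\sum_{j=0}^4 p_j X^j$. The critical points of $P_0$ are $(\zeta_{i,0})_{1\le i\le 5}=(-\sqrt3/2,-1/2,0,1/2,\sqrt3/2)$, all non-degenerate, with critical values $(a_{i,0})_{1\le i\le 5}=(-1,1,-1,1,-1)$, and $\beta_0=1$ is a repelling fixed point of $P_0$. For $p$ near $0$ let $\zeta_{i,p}$, $a_{i,p}=P_p(\zeta_{i,p})$ and $\beta_p$ be the continuations of the critical points, critical values and of the fixed point $\beta_0$ for $P_p$. Then \[ \det\big[\partial_{p_j} (P_p(a_{i, p}))-\partial_{p_j} \beta_p \big]_{1\le i\le 5,\,0\le j\le 4} \neq 0 \quad \text{at } p=0 .\] *)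

From HB Require Import structures.
From mathcomp Require Import all_boot all_order all_algebra.
From mathcomp Require Import all_classical all_reals all_analysis.
Set Implicit Arguments. Unset Strict Implicit. Unset Printing Implicit Defensive.
Import Order.TTheory GRing.Theory Num.Theory.
Import numFieldNormedType.Exports.
Local Open Scope ring_scope.

Definition P0 (R : realType) : {poly R} :=
  32%:R *: 'X^6 - 48%:R *: 'X^4 + 18%:R *: 'X^2 - 1.

Definition Pp (R : realType) (p : 'rV[R]_5) : {poly R} :=
  P0 R + \sum_(j < 5) (p 0 j) *: 'X^j.

(* critical points of P_0, zeta_{i,0} for i = 1..5 (indexed by 'I_5 = 0..4) *)
Definition zeta0 (R : realType) (i : 'I_5) : R :=
  nth 0 [:: - (Num.sqrt 3%:R / 2%:R); - (1 / 2%:R); 0; 1 / 2%:R;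
            Num.sqrt 3%:R / 2%:R] i.

From mathcomp Require Import all_boot all_order all_algebra.
From mathcomp Require Import all_classical all_reals all_analysis.
From mathcomp Require Import ring lra.
Import Order.TTheory GRing.Theory Num.Theory.
Import numFieldNormedType.Exports.
Local Open Scope ring_scope.

(* P_0 is the Chebyshev polynomial T_6.  Along the line p = t e_j the family P_p
   is the pencil P_0 + t X^j.  Since zeta_{i,0} is a critical point of P_0, the
   motion of the critical point does not contribute to first order:
   d/dt P_p(a_{i,p}) = P_0'(a_i) zeta_i^j + a_i^j = 36 a_i zeta_i^j + a_i^j.
   Implicit differentiation of P_p(beta_p) = beta_p gives
   d/dt beta = 1 / (1 - P_0'(1)) = -1/35.  Keeping sqrt 3 as a symbol s, the
   determinant of the resulting explicit 5x5 matrix is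
   -(8 * 3^11 / 35) s^3 (s^2 - 1) (7 s^2 - 11), which is nonzero at s = sqrt 3. *)

Section DirectionalDerivativeAlongLine.
Context {R : numFieldType} {V W : normedModType R}.

Lemma derive_line (f : V -> W) (x v : V) :
  'D_v f x = 'D_1 (fun h : R => f (h *: v + x)) 0.
Proof.
rewrite /derive; do 2 f_equal; apply: funext => h /=.
by rewrite scale0r !add0r addr0 [h%:A]mulr1 addrC.
Qed.

Lemma near_line {P : V -> Prop} {x : V} (v : V) :
  (\forall y \near x, P y) -> \forall h \near (0 : R), P (h *: v + x).
Proof.
have line_cvg : (h *: v + x @[h --> (0 : R)] --> 0 *: v + x)%classic.
  exact: (cvgD (@scalel_continuous R V v 0) (cvg_cst x)).
by rewrite scale0r add0r in line_cvg; exact: line_cvg.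
Qed.

End DirectionalDerivativeAlongLine.

Section PolynomialPencil.
Context {R : realFieldType}.
Implicit Types P Q : {poly R}.

Lemma is_derive1_comp {f g : R -> R} {x df dg : R} :
  is_derive x 1 f df -> is_derive (f x) 1 g dg -> is_derive x 1 (g \o f) (dg * df).
Proof.
move=> [fx <-] [gfx <-].
have fD : differentiable f x by exact/derivable1_diffP.
have gD : differentiable g (f x) by exact/derivable1_diffP.
have gfx' : derivable (g \o f) x 1 by apply/derivable1_diffP; exact: differentiable_comp.
have := derive1_comp fx gfx; rewrite !derive1E => gfE.
by apply: DeriveDef; rewrite -?gfE.
Qed.

Lemma is_derive_horner_pencil P Q {g : R -> R} {x dg : R} : is_derive x 1 g dg ->
  is_derive x 1 (fun t => (P + t *: Q).[g t])
    (P^`().[g x] * dg + (x * (Q^`().[g x] * dg) + Q.[g x])).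
Proof.
move=> gx.
have Pg := is_derive1_comp gx (is_derive_poly P (g x)).
have Qg := is_derive1_comp gx (is_derive_poly Q (g x)).
have -> : (fun t => (P + t *: Q).[g t]) = horner P \o g + id * (horner Q \o g).
  by apply: funext => t; rewrite /= hornerD hornerZ.
apply: is_derive_eq (is_deriveD Pg (is_deriveM (is_derive_id x 1) Qg)) _.
by rewrite /= [_%:A]mulr1.
Qed.

Lemma derive_pencil_fixed_point P Q (b : R -> R) :
  derivable b 0 1 -> (\forall t \near 0, (P + t *: Q).[b t] = b t) ->
  P^`().[b 0] != 1 -> 'D_1 b 0 = Q.[b 0] / (1 - P^`().[b 0]).
Proof.
move=> /derivableP bD bfix P'b_neq1.
have [_ pencilD] := is_derive_horner_pencil P Q bD.
have bDE : 'D_1 b 0 = P^`().[b 0] * 'D_1 b 0 + Q.[b 0].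
  by rewrite -[LHS](near_eq_derive _ bfix) pencilD mul0r add0r.
have -> : Q.[b 0] = 'D_1 b 0 * (1 - P^`().[b 0]).
  by rewrite mulrBr mulr1 [in X in X - _]bDE; ring.
by rewrite mulfK // subr_eq0 eq_sym.
Qed.

Lemma derive_pencil_iterate P Q (z : R -> R) :
  derivable z 0 1 -> P^`().[z 0] = 0 ->
  'D_1 (fun t : R => (P + t *: Q).[(P + t *: Q).[z t]]) 0
    = P^`().[P.[z 0]] * Q.[z 0] + Q.[P.[z 0]].
Proof.
move=> /derivableP zD P'z0.
have innerD := is_derive_horner_pencil P Q zD.
rewrite P'z0 !mul0r !add0r in innerD.
have [_ ->] := is_derive_horner_pencil P Q innerD.
by rewrite scale0r addr0 mul0r add0r.
Qed.

End PolynomialPencil.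

Section Laplace.
Context {R : comPzRingType}.

(* Cofactor expansion along the first row, on nat-indexed entries, so that it
   unfolds by computation for an explicit size. *)
Fixpoint laplace_det n (f : nat -> nat -> R) : R :=
  if n is m.+1 then
    foldr (fun j acc => (-1) ^+ j * f 0 j * laplace_det m (fun i k => f i.+1 (bump j k)) + acc)
      0 (iota 0 n)
  else 1.

Lemma det_laplace n (f : nat -> nat -> R) :
  \det (\matrix_(i < n, j < n) f i j) = laplace_det n f.
Proof.
elim: n f => [|n IH] f; first by rewrite det_mx00.
rewrite (expand_det_row _ 0).
have minorE (j : 'I_n.+1) :
    \det (row' 0 (col' j (\matrix_(i < n.+1, k < n.+1) f i k)))
    = laplace_det n (fun i k => f i.+1 (bump j k)).
  by rewrite -IH; congr (\det _); apply/matrixP => i k; rewrite !mxE.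
under eq_bigr => j _ do rewrite mxE /cofactor minorE add0n mulrCA mulrA.
by rewrite -(big_mkord xpredT (fun j =>
  (-1) ^+ j * f 0 j * laplace_det n (fun i k => f i.+1 (bump j k)))) unlock.
Qed.

End Laplace.

Section Jacobian.
Variable R : numFieldType.

Definition crit_values : seq R := [:: -1; 1; -1; 1; -1].

(* For s = sqrt 3 these are the zeta_{i,0}; s is kept symbolic so that the
   determinant below is a polynomial identity in s. *)
Definition crit_points (s : R) : seq R :=
  [:: - (s / 2%:R); - (1 / 2%:R); 0; 1 / 2%:R; s / 2%:R].

Definition jacobian_entry (s : R) (i j : nat) : R :=
  crit_values`_i ^+ j + 36%:R * crit_values`_i * (crit_points s)`_i ^+ j + 35%:R^-1.

Lemma det_jacobian (s : R) :
  \det (\matrix_(i < 5, j < 5) jacobian_entry s i j)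
  = - (8%:R * 3%:R ^+ 11 / 35%:R) * s ^+ 3 * (s ^+ 2 - 1) * (7%:R * s ^+ 2 - 11%:R).
Proof. by rewrite det_laplace /jacobian_entry /= /bump /=; field; rewrite ?pnatr_eq0. Qed.

End Jacobian.

Section ChebyshevPerturbation.
Context {R : realType}.

Lemma Pp0 : Pp (0 : 'rV[R]_5) = P0 R.
Proof. by rewrite /Pp big1 ?addr0 // => j _; rewrite mxE scale0r. Qed.

Lemma Pp_line (p : 'rV[R]_5) (j : 'I_5) (t : R) :
  Pp (t *: delta_mx 0 j + p) = Pp p + t *: 'X^j.
Proof.
rewrite /Pp -[RHS]addrA; congr (_ + _).
under eq_bigr => k _ do rewrite !mxE scalerDl.
rewrite big_split /= addrC; congr (_ + _).
rewrite (bigD1 j) //= big1 ?addr0 => [|k /negbTE kj]; first by rewrite eqxx mulr1.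
by rewrite kj mulr0 scale0r.
Qed.

Lemma horner_P0 (x : R) :
  (P0 R).[x] = 32%:R * (x ^+ 2) ^+ 3 - 48%:R * (x ^+ 2) ^+ 2 + 18%:R * x ^+ 2 - 1.
Proof. by rewrite /P0 !hornerE; ring. Qed.

Lemma horner_P0' (x : R) :
  (P0 R)^`().[x] = x * (192%:R * (x ^+ 2) ^+ 2 - 192%:R * x ^+ 2 + 36%:R).
Proof.
rewrite /P0 -polyC1 !(derivB, derivD, derivZ, derivXn, derivC) !hornerE /=; ring.
Qed.

Lemma horner_P0'_sqr1 (x : R) : x ^+ 2 = 1 -> (P0 R)^`().[x] = 36%:R * x.
Proof. by move=> x2; rewrite horner_P0' x2; ring. Qed.

Lemma sqr_zeta0 (i : 'I_5) :
  zeta0 R i ^+ 2 = [:: 3%:R / 4%:R; 1 / 4%:R; 0; 1 / 4%:R; 3%:R / 4%:R]`_i.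
Proof.
have s2 : Num.sqrt (3%:R : R) ^+ 2 = 3%:R by rewrite sqr_sqrtr ?ler0n.
by case: i => [[|[|[|[|[|//]]]]] Hi] /=; rewrite ?sqrrN ?expr_div_n ?s2 -?natrX ?expr1n ?expr0n.
Qed.

Lemma horner_P0_zeta0 (i : 'I_5) : (P0 R).[zeta0 R i] = (crit_values R)`_i.
Proof.
rewrite horner_P0 sqr_zeta0.
by case: i => [[|[|[|[|[|//]]]]] Hi] /=; field; rewrite ?pnatr_eq0.
Qed.

Lemma sqr_crit_values (i : 'I_5) : (crit_values R)`_i ^+ 2 = 1.
Proof. by case: i => [[|[|[|[|[|//]]]]] Hi]; rewrite /= ?sqrrN expr1n. Qed.

Lemma horner_P0'_zeta0 (i : 'I_5) : (P0 R)^`().[zeta0 R i] = 0.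
Proof.
rewrite horner_P0' sqr_zeta0.
by case: i => [[|[|[|[|[|//]]]]] Hi] /=; rewrite ?mul0r //; field; rewrite ?pnatr_eq0.
Qed.

Lemma derive_fixed_point_continuation (beta : 'rV[R]_5 -> R) (j : 'I_5) :
  beta 0 = 1 -> differentiable beta 0 ->
  (\forall p \near (0 : 'rV[R]_5), (Pp p).[beta p] = beta p) ->
  'D_(delta_mx 0 j) beta 0 = - 35%:R^-1.
Proof.
move=> beta0 betaD beta_fix; rewrite derive_line.
have b0 : beta (0 *: delta_mx 0 j + 0) = 1 by rewrite scale0r addr0.
have P0'1 : (P0 R)^`().[1] = 36%:R by rewrite horner_P0'_sqr1 ?expr1n ?mulr1.
have betaD' : derivable beta 0 (delta_mx 0 j) by exact: diff_derivable.
rewrite (derive_pencil_fixed_point (P0 R) 'X^j).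
- rewrite b0 P0'1 hornerXn expr1n.
  have -> : 1 - 36%:R = - 35%:R :> R by lra.
  by rewrite div1r invrN.
- exact: (derivable1P beta 0 (delta_mx 0 j)).1.
- by apply: filterS (near_line (delta_mx 0 j) beta_fix) => t; rewrite Pp_line Pp0.
- by rewrite b0 P0'1 pnatr_eq1.
Qed.

Lemma derive_critical_value (zeta : 'rV[R]_5 -> R) (i j : 'I_5) :
  zeta 0 = zeta0 R i -> differentiable zeta 0 ->
  'D_(delta_mx 0 j) (fun p => (Pp p).[(Pp p).[zeta p]]) 0
    = jacobian_entry R (Num.sqrt 3%:R) i j - 35%:R^-1.
Proof.
move=> zeta0E zetaD; rewrite derive_line.
under eq_fun => t do rewrite Pp_line Pp0.
have zetaD' : derivable zeta 0 (delta_mx 0 j) by exact: diff_derivable.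
have z0 : zeta (0 *: delta_mx 0 j + 0) = zeta0 R i by rewrite scale0r addr0.
rewrite derive_pencil_iterate /=.
- rewrite z0 horner_P0_zeta0 horner_P0'_sqr1 ?sqr_crit_values // !hornerXn.
  by rewrite /jacobian_entry addrK addrC.
- exact: (derivable1P zeta 0 (delta_mx 0 j)).1.
- by rewrite z0 horner_P0'_zeta0.
Qed.

End ChebyshevPerturbation.

Theorem lemma2p12 (R : realType)
  (zeta : 'I_5 -> 'rV[R]_5 -> R) (beta : 'rV[R]_5 -> R) :
  (* continuations of the critical points zeta_{i,0} *)
  (forall i, zeta i 0 = zeta0 R i) ->
  (forall i, differentiable (zeta i) 0) ->
  (forall i, \forall p \near (0 : 'rV[R]_5), (Pp p)^`().[zeta i p] = 0) ->
  (* continuation of the fixed point beta_0 = 1 *)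
  beta 0 = 1 ->
  differentiable beta 0 ->
  (\forall p \near (0 : 'rV[R]_5), (Pp p).[beta p] = beta p) ->
  \det (\matrix_(i < 5, j < 5)
          ('D_(delta_mx 0 j) (fun p => (Pp p).[(Pp p).[zeta i p]]) 0
           - 'D_(delta_mx 0 j) beta 0)) != 0.
Proof.
move=> zeta0E zetaD _ beta0 betaD beta_fix.
have -> : \matrix_(i < 5, j < 5)
      ('D_(delta_mx 0 j) (fun p => (Pp p).[(Pp p).[zeta i p]]) 0
       - 'D_(delta_mx 0 j) beta 0)
    = \matrix_(i < 5, j < 5) jacobian_entry R (Num.sqrt 3%:R) i j.
  apply/matrixP => i j; rewrite !mxE (derive_critical_value _ i) //.
  by rewrite derive_fixed_point_continuation // opprK subrK.
set s := Num.sqrt (3%:R : R).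
have s2 : s ^+ 2 = 3%:R by rewrite sqr_sqrtr ?ler0n.
have s_neq0 : s != 0 by rewrite gt_eqF // sqrtr_gt0 ltr0n.
by rewrite det_jacobian s2 !mulf_neq0 ?oppr_eq0 ?expf_neq0 // ?subr_eq0 ?pnatr_eq0.
Qed.
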